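(* Let $L$ be a precompact Hausdorff co-Heyting algebra, identified with its image in $\widehat L$. Then: (1) $L$ and $\widehat L$ have the same completely join irreducible elements; (2) every join irreducible element of $L$ is completely join irreducible; (3) for every $x\in\mathcal I^{!\vee}(L)$, the cofoundation rank of $x$ in the ordered set $\mathcal I^{!\vee}(L)$ is finite and equal to $\operatorname{codim}_L x$; (4) $\mathcal I^{!\vee}(L)$ satisfies the ascending chain condition; (5) for every $a\in L$, $a$ is the complete join in $L$ of the set of its join irreducible components.
   Context: A co-Heyting algebra is a bounded distributive lattice $(L,0,1,\vee,\wedge)$ such that $a-b=\min\{c\in L: a\le b\vee c\}$ exists for all $a,b$. For an ideal $I$, $L/I$ is the quotient by $a\equiv_I b\iff(a-b)\vee(b-a)\in I$. $\operatorname{Spec}L$ is the set of prime filters ordered by inclusion; height = foundation rank there; $\operatorname{codim}_La=\min\{\operatorname{height}\mathfrak p: a\in\mathfrak p\}$ ($+\infty$ if none); $dL=\{a:\operatorname{codim}_La\ge d\}$ is an ideal. $L$ is Hausdorff if every nonzero element has finite codimension; precompact if $L/dL$ is finite for every positive integer $d$. $\widehat L$ is the projective limit of the quotients $L/dL$ under the canonical surjections $L/(d+1)L\to L/dL$, and $L$ embeds in it diagonally. $x\ne0$ is join irreducible if $x\le a\vee b$ implies $x\le a$ or $x\le b$; completely join irreducible if $x\le\bigvee A$ (for any $A$ whose join exists) implies $x\le a$ for some $a\in A$; $\mathcal I^{!\vee}(L)$ is the set of completely join irreducible elements. The join irreducible components of $a$ are the maximal elements of the set of join irreducible elements below $a$.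 The cofoundation rank of $x$ in an ordered set $E$ is its foundation rank for the reverse order (rank $\ge\beta+1$ iff some strictly larger element has rank $\ge\beta$; limits by intersection). *)

From HB Require Import structures.
From mathcomp Require Import all_boot all_order.
Set Implicit Arguments. Unset Strict Implicit. Unset Printing Implicit Defensive.
Import Order.TTheory.
Local Open Scope order_scope.

Section Generic.
Variable T : Type.
Variable E : T -> Prop.
Variable le : T -> T -> Prop.

Definition is_lub (A : T -> Prop) (s : T) : Prop :=
  E s /\ (forall a, A a -> le a s) /\
  (forall u, E u -> (forall a, A a -> le a u) -> le s u).

Definition cji (bot : T) (x : T) : Prop :=
  E x /\ ~ le x bot /\
  forall (A : T -> Prop) (s : T), (forall a, A a -> E a) ->
    is_lub A s -> le x s -> exists a, A a /\ le x a.

(* foundation rank w.r.t. the strict order lt on E, finite levels: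
   rank_ge lt x n  <->  "rank of x >= n"
   (rank >= n+1 iff some strictly smaller element has rank >= n). *)
Fixpoint rank_ge (lt : T -> T -> Prop) (x : T) (n : nat) : Prop :=
  match n with
  | 0 => True
  | n'.+1 => exists y, E y /\ lt y x /\ rank_ge lt y n'
  end.

Definition rank_eq (lt : T -> T -> Prop) (x : T) (n : nat) : Prop :=
  rank_ge lt x n /\ ~ rank_ge lt x n.+1.
End Generic.

Section CoHeyting.
Variables (disp : Order.disp_t) (L : tbDistrLatticeType disp).

Definition is_diff (a b c : L) : Prop :=
  a <= b `|` c /\ forall c', a <= b `|` c' -> c <= c'.

Definition coHeyting : Prop := forall a b : L, exists c, is_diff a b c.

Definition cong (I : L -> Prop) (a b : L) : Prop :=
  exists c1 c2, is_diff a b c1 /\ is_diff b a c2 /\ I (c1 `|` c2).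

Definition prime_filter (p : L -> Prop) : Prop :=
  p \top /\ ~ p \bot /\
  (forall a b, p a -> a <= b -> p b) /\
  (forall a b, p a -> p b -> p (a `&` b)) /\
  (forall a b, p (a `|` b) -> p a \/ p b).

Definition sincl (q p : L -> Prop) : Prop :=
  (forall a, q a -> p a) /\ ~ (forall a, p a -> q a).

Definition height_ge (p : L -> Prop) (n : nat) : Prop :=
  rank_ge prime_filter sincl p n.

(* codim_L a >= n  (codim = min of heights of primes containing a, +oo if none) *)
Definition codim_ge (a : L) (n : nat) : Prop :=
  forall p, prime_filter p -> p a -> height_ge p n.

Definition codim_eq (a : L) (n : nat) : Prop :=
  codim_ge a n /\ ~ codim_ge a n.+1.

Definition dL (d : nat) : L -> Prop := fun a => codim_ge a d.

Definition Hausdorff : Prop :=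
  forall a : L, a != \bot -> exists n, codim_eq a n.

(* L/dL finite for every positive d: finitely many classes *)
Definition precompact : Prop :=
  forall d, 0 < d -> exists s : seq L, forall a, exists2 b, b \in s & cong (dL d) a b.

(* an element of hat L is represented by a family f, f d representing the
   class of L/dL (d > 0), compatible with the surjections L/(d+1)L -> L/dL *)
Definition hat_elt (f : nat -> L) : Prop :=
  forall d, 0 < d -> cong (dL d) (f d.+1) (f d).

(* componentwise order, the order of L/dL being [a] <= [b] iff [a `|` b] = [b] *)
Definition hat_le (f g : nat -> L) : Prop :=
  forall d, 0 < d -> cong (dL d) (f d `|` g d) (g d).

Definition hat_eq (f g : nat -> L) : Prop := hat_le f g /\ hat_le g f.

Definition hat_of (a : L) : nat -> L := fun _ => a.

Definition Lle (x y : L) : Prop := x <= y.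

Definition cjiL (x : L) : Prop := cji (fun _ => True) Lle \bot x.

Definition cjiHat (f : nat -> L) : Prop := cji hat_elt hat_le (hat_of \bot) f.

Definition join_irr (x : L) : Prop :=
  x != \bot /\ forall a b, x <= a `|` b -> x <= a \/ x <= b.

Definition ji_component (a x : L) : Prop :=
  join_irr x /\ x <= a /\
  forall y, join_irr y -> y <= a -> x <= y -> y = x.

Definition cjiL_corank_eq (x : L) (n : nat) : Prop :=
  rank_eq cjiL (fun y z => z < y) x n.

End CoHeyting.

From mathcomp Require Import all_boot all_order.
From Stdlib Require Import Classical ClassicalEpsilon.
From mathcomp Require classical_sets.
Import Order.TTheory.
Local Open Scope order_scope.
Set Implicit Arguments. Unset Strict Implicit. Unset Printing Implicit Defensive.

(* Hausdorffness provides enough primes of finite height to separate elements,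
   and precompactness makes each of them principal: a prime [p] of height < N
   is a union of classes modulo N L, of which there are finitely many, so [p] is
   generated by [e - t] where [e] (resp. [t]) is the meet (resp. join) of the
   representatives inside (resp. outside) [p], and [t] is the largest element
   outside [p]. Hence the join irreducible [x] are the generators of the primes
   of finite height, and "x <= join A implies x <= a for some a in A" follows
   from the existence of that largest element [t] not above [x]. Strictly larger
   join irreducibles have strictly smaller codimension, which gives (3), (4) and
   the maximal components of (5). In the completion, [hat x <= f] is decided by
   the single coordinate [f (codim x + 1)], because a prime of small height
   cannot tell apart the later coordinates of [f]. *)

(** * Prime filters, height and codimension *)

Lemma rank_ge_le (T : Type) (E : T -> Prop) (lt : T -> T -> Prop) m n (u : T) :
  (m <= n)%N -> rank_ge E lt u n -> rank_ge E lt u m.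
Proof.
elim: n m u => [|n IH] [|m] u //= mn [y [Ey [yu hy]]].
by exists y; split=> //; split=> //; apply: IH.
Qed.

Section Spectrum.
Variables (disp : Order.disp_t) (L : tbDistrLatticeType disp).
Implicit Types (a b c x y : L) (p q : L -> Prop).

Definition up x : L -> Prop := fun a => x <= a.

Definition finite_height p : Prop := exists N, ~ height_ge p N.

Lemma prime_filter1 p : prime_filter p -> p \top.  Proof. by case. Qed.
Lemma prime_filterN0 p : prime_filter p -> ~ p \bot.  Proof. by case=> _ []. Qed.
Lemma prime_filter_up p a b : prime_filter p -> p a -> a <= b -> p b.
Proof. by case=> _ [_ [h _]]; apply: h. Qed.
Lemma prime_filterI p a b : prime_filter p -> p a -> p b -> p (a `&` b).
Proof. by case=> _ [_ [_ [h _]]]; apply: h. Qed.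
Lemma prime_filterU p a b : prime_filter p -> p (a `|` b) -> p a \/ p b.
Proof. by case=> _ [_ [_ [_ h]]]; apply: h. Qed.
Lemma prime_filterNU p a b : prime_filter p -> ~ p a -> ~ p b -> ~ p (a `|` b).
Proof. by move=> pp ha hb /(prime_filterU pp) []. Qed.

Lemma prime_filter_meet_seq p (S : seq L) : prime_filter p ->
  exists2 e, p e & forall b, b \in S -> p b -> e <= b.
Proof.
move=> pp; elim: S => [|b S [e pe he]]; first by exists \top => //; exact: prime_filter1.
case: (classic (p b)) => pb; last first.
  by exists e => // b'; rewrite in_cons => /predU1P [-> //|]; apply: he.
exists (e `&` b); first exact: prime_filterI.
move=> b'; rewrite in_cons => /predU1P [-> _|b'S pb']; first exact: leIr.
exact: le_trans (leIl _ _) (he _ b'S pb').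
Qed.

Lemma prime_filter_join_seq p (S : seq L) : prime_filter p ->
  exists2 t, ~ p t & forall b, b \in S -> ~ p b -> b <= t.
Proof.
move=> pp; elim: S => [|b S [t pt ht]]; first by exists \bot => //; exact: prime_filterN0.
case: (classic (p b)) => pb.
  by exists t => // b'; rewrite in_cons => /predU1P [-> //|]; apply: ht.
exists (t `|` b); first exact: prime_filterNU.
move=> b'; rewrite in_cons => /predU1P [-> _|b'S pb']; first exact: leUr.
exact: le_trans (ht _ b'S pb') (leUl _ _).
Qed.

Lemma height_ge_sub p q n :
  (forall a, q a -> p a) -> height_ge q n -> height_ge p n.
Proof.
case: n => [//|n] hqp /= [y [py [[hyq hnq] hy]]].
exists y; split=> //; split=> //; split; first by move=> a /hyq /hqp.
by move=> hpy; apply: hnq => a /hqp /hpy.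
Qed.

Lemma height_ge_le p m n : (m <= n)%N -> height_ge p n -> height_ge p m.
Proof. exact: rank_ge_le. Qed.

Lemma finite_height_sub p q :
  (forall a, q a -> p a) -> finite_height p -> finite_height q.
Proof. by move=> qp [N hN]; exists N => /(height_ge_sub qp). Qed.

Lemma prime_height_exact_below p n : prime_filter p -> finite_height p ->
  height_ge p n -> exists u, [/\ prime_filter u, forall a, u a -> p a,
    height_ge u n & ~ height_ge u n.+1].
Proof.
move=> pp [N hN]; elim: N p pp hN => [|N IH] p pp hN hp; first by case: hN.
have [hp1|] := classic (height_ge p n.+1); last by exists p.
case: hp1 => y [py [yp hy]].
have hyN : ~ height_ge y N by move=> hyN; apply: hN; exists y.
case: yp => yp _.
have [u [pu uy hu1 hu2]] := IH y py hyN hy.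
by exists u; split=> // a /uy /yp.
Qed.

Lemma codim_ge_le a m n : (m <= n)%N -> codim_ge a n -> codim_ge a m.
Proof. by move=> mn h p pp pa; apply: height_ge_le mn _; apply: h. Qed.

Lemma codim_ge_anti a b n : a <= b -> codim_ge b n -> codim_ge a n.
Proof. by move=> ab h p pp pa; apply: h => //; apply: prime_filter_up pa ab. Qed.

Lemma codim_geU a b n : codim_ge a n -> codim_ge b n -> codim_ge (a `|` b) n.
Proof. by move=> ha hb p pp /(prime_filterU pp) [/ha|/hb]; apply. Qed.

Lemma codim_ge0 n : codim_ge (\bot : L) n.
Proof. by move=> p /prime_filterN0. Qed.

Lemma join_irr_neq0 x : join_irr x -> x != \bot.  Proof. by case. Qed.

Lemma join_irr_up_prime x : join_irr x -> prime_filter (up x).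
Proof.
case=> hx hj; split; first exact: lex1.
split; first by rewrite /up lex0; apply/negP.
split; first by move=> a b; apply: le_trans.
split; first by move=> a b ha hb; rewrite /up lexI ha hb.
by move=> a b; apply: hj.
Qed.

Lemma principal_prime_join_irr p x :
  prime_filter p -> (forall a, p a <-> x <= a) -> join_irr x.
Proof.
move=> pp hx; split.
  by apply/eqP => x0; apply: (prime_filterN0 pp); apply/hx; rewrite x0.
by move=> a b /hx /(prime_filterU pp) [] /hx; tauto.
Qed.

Lemma codim_ge_up x n : join_irr x -> codim_ge x n <-> height_ge (up x) n.
Proof.
move=> jx; split; first by apply; [exact: join_irr_up_prime | exact: lexx].
by move=> h p pp px; apply: height_ge_sub h => a; apply: prime_filter_up.
Qed.

Lemma sincl_up x y : x < y -> sincl (up y) (up x).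
Proof.
move=> xy; split=> [a|h]; first exact: le_trans (ltW xy).
by move: xy; rewrite lt_leAnge (h x (lexx x)) andbF.
Qed.

Lemma codim_ge_join_irr_lt x y n : join_irr y -> x < y ->
  codim_ge y n -> codim_ge x n.+1.
Proof.
move=> jy xy /(codim_ge_up _ jy) hy p pp px.
by apply: height_ge_sub (fun a => prime_filter_up pp px) _; exists (up y);
  split; [exact: join_irr_up_prime | split; [exact: sincl_up|]].
Qed.

Lemma cji_join_irr x : cjiL x -> join_irr x.
Proof.
case=> _ [hx hc]; split; first by apply/eqP => x0; apply: hx; rewrite /Lle x0.
move=> a b xab; pose A z := z = a \/ z = b.
have lubA : is_lub (fun _ => True) (@Lle _ L) A (a `|` b).
  split=> //; split=> [z [->|->]|u _ hu]; first exact: leUl; first exact: leUr.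
  by rewrite /Lle leUx; apply/andP; split; apply: hu; [left|right].
by have [z [[->|->] xz]] := hc A _ (fun _ _ => I) lubA xab; [left|right].
Qed.

End Spectrum.

(** * The prime filter theorem *)

Section PrimeFilterTheorem.
Variables (disp : Order.disp_t) (L : tbDistrLatticeType disp).
Variables (I : L -> Prop) (e : L).
Hypotheses (I_down : forall a b, I b -> a <= b -> I a)
  (I_join : forall a b, I a -> I b -> I (a `|` b)) (I0 : I \bot) (Ie : ~ I e).
Implicit Types (a b c g : L) (G : L -> Prop).

(* Filters whose meet with e misses I; the empty set is one, so Zorn applies to
   them directly, and a maximal one turns out to contain e. *)
Definition avoiding_filter G : Prop :=
  [/\ forall a b, G a -> a <= b -> G b, forall a b, G a -> G b -> G (a `&` b)
    & forall g, G g -> ~ I (e `&` g)].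

Lemma maximal_avoiding_filter : exists M, avoiding_filter M /\
  forall G, classical_sets.proper M G -> ~ avoiding_filter G.
Proof.
apply: classical_sets.Zorn_bigcup => F FP Ftot; split.
- by move=> a b [X FX Xa] ab; exists X => //; have [Xup _ _] := FP X FX; apply: Xup ab.
- move=> a b [X FX Xa] [Y FY Yb].
  have [XY|YX] := Ftot X Y FX FY.
    by exists Y => //; have [_ YI _] := FP Y FY; apply: YI => //; apply: XY.
  by exists X => //; have [_ XI _] := FP X FX; apply: XI => //; apply: YX.
- by move=> g [X FX Xg]; have [_ _ Xav] := FP X FX; apply: Xav.
Qed.

Variable M : L -> Prop.
Hypotheses (M_avoid : avoiding_filter M)
  (M_max : forall G, classical_sets.proper M G -> ~ avoiding_filter G).

Lemma maximal_avoiding_filter_escape a : ~ M a ->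
  I (e `&` a) \/ exists2 g, M g & I (e `&` (g `&` a)).
Proof.
case: M_avoid => Mup Mmeet _ nMa.
pose Ma c := a <= c \/ exists2 g, M g & g `&` a <= c.
apply: NNPP => hno; apply: (M_max (G := Ma)).
  split=> [c Mc|MaM]; first by right; exists c; rewrite ?leIl.
  by apply: nMa; apply: MaM; left.
split.
- move=> c d [ac|[g Mg gc]] cd; first by left; apply: le_trans cd.
  by right; exists g => //; apply: le_trans cd.
- move=> c d [ac|[g Mg gc]] [ad|[g' Mg' gd]].
  + by left; rewrite lexI ac ad.
  + by right; exists g' => //; rewrite lexI gd (le_trans (leIr _ _) ac).
  + by right; exists g => //; rewrite lexI gc (le_trans (leIr _ _) ad).
  + right; exists (g `&` g'); first exact: Mmeet.
    by rewrite lexI (le_trans _ gc) ?(le_trans _ gd) // leI2 ?leIl ?leIr.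
- move=> c [ac|[g Mg gc]] Iec; apply: hno.
    by left; apply: I_down Iec _; rewrite leI2.
  by right; exists g => //; apply: I_down Iec _; rewrite leI2.
Qed.

Lemma maximal_avoiding_filter_e : M e.
Proof.
case: M_avoid => _ _ Mav; apply: NNPP => /maximal_avoiding_filter_escape [].
  by rewrite meetxx.
case=> g Mg Ig; apply: (Mav g Mg); apply: I_down Ig _.
by rewrite [g `&` e]meetC meetA meetxx.
Qed.

Lemma maximal_avoiding_filter_prime : prime_filter M.
Proof.
case: M_avoid => Mup Mmeet Mav; have Me := maximal_avoiding_filter_e.
have Mtop : M \top by apply: Mup Me (lex1 _).
have escape a : ~ M a -> exists2 g, M g & I (e `&` (g `&` a)).
  by case/maximal_avoiding_filter_escape => // Iea; exists \top; rewrite ?meet1x.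
split=> //; split; first by move=> /Mav; rewrite meetx0.
do 2 (split=> //); move=> a b Mab; apply: NNPP => hn.
have [g1 Mg1 I1] := escape a (fun h => hn (or_introl h)).
have [g2 Mg2 I2] := escape b (fun h => hn (or_intror h)).
apply: (Mav (g1 `&` g2 `&` (a `|` b))); first exact: Mmeet (Mmeet _ _ Mg1 Mg2) Mab.
apply: I_down (I_join I1 I2) _; rewrite -meetUr; apply: leI2 => //.
by rewrite meetUr leU2 // leI2 ?leIl ?leIr.
Qed.

End PrimeFilterTheorem.

Lemma prime_filter_theorem (disp : Order.disp_t) (L : tbDistrLatticeType disp)
    (I : L -> Prop) (e : L) :
  (forall a b, I b -> a <= b -> I a) -> (forall a b, I a -> I b -> I (a `|` b)) ->
  I \bot -> ~ I e -> exists M, [/\ prime_filter M, M e & forall a, M a -> ~ I a].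
Proof.
move=> I_down I_join I0 Ie; have [M [Mav Mmax]] := maximal_avoiding_filter I e.
exists M; split; first exact: maximal_avoiding_filter_prime Mmax.
  exact: maximal_avoiding_filter_e Mmax.
by move=> a Ma Ia; case: Mav => _ _ /(_ a Ma); apply; apply: I_down Ia (leIr _ _).
Qed.

Section CoHeyting.
Variables (disp : Order.disp_t) (L : tbDistrLatticeType disp).
Hypothesis hcoH : coHeyting L.
Implicit Types (a b c e f x : L) (p q : L -> Prop).

Definition cdiff a b : L := proj1_sig (constructive_indefinite_description _ (hcoH a b)).

Lemma cdiffP a b : is_diff a b (cdiff a b).
Proof. exact: proj2_sig (constructive_indefinite_description _ (hcoH a b)). Qed.

Lemma le_cdiff a b : a <= b `|` cdiff a b.
Proof. by case: (cdiffP a b). Qed.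

Lemma cdiff_min a b c : a <= b `|` c -> cdiff a b <= c.
Proof. by case: (cdiffP a b) => _; apply. Qed.

Lemma is_diffE a b c : is_diff a b c -> c = cdiff a b.
Proof.
case=> h1 h2; apply/le_anti/andP; split; first exact/h2/le_cdiff.
exact: cdiff_min.
Qed.

Lemma cdiff_le a b : cdiff a b <= a.
Proof. by apply: cdiff_min; rewrite leUr. Qed.

Lemma cdiff_eq0 a b : cdiff a b = \bot <-> a <= b.
Proof.
split=> [h|h]; first by have := le_cdiff a b; rewrite h joinx0.
by apply/le_anti; rewrite le0x andbT; apply: cdiff_min; rewrite joinx0.
Qed.

Lemma cdiffxx a : cdiff a a = \bot.
Proof. exact/cdiff_eq0. Qed.

Lemma cdiff_monol a a' b : a <= a' -> cdiff a b <= cdiff a' b.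
Proof. by move=> h; apply: cdiff_min; apply: le_trans h (le_cdiff _ _). Qed.

Lemma cdiff_joinl a a' b : cdiff (a `|` a') b <= cdiff a b `|` cdiff a' b.
Proof.
apply: cdiff_min; rewrite joinA leUx; apply/andP; split.
  exact: le_trans (le_cdiff a b) (leUl _ _).
by apply: le_trans (le_cdiff a' b) _; rewrite leU2 ?leUl.
Qed.

Lemma cdiff_trans a b c : cdiff a c <= cdiff a b `|` cdiff b c.
Proof.
apply: cdiff_min; apply: le_trans (le_cdiff a b) _.
rewrite leUx (le_trans (leUl _ _) (leUr _ _)) andbT.
exact: le_trans (le_cdiff b c) (leU2 (lexx c) (leUr _ _)).
Qed.

Lemma prime_filter_cdiff p a b : prime_filter p -> p a -> ~ p b -> p (cdiff a b).
Proof.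
move=> pp pa nb; have := prime_filter_up pp pa (le_cdiff a b).
by case/(prime_filterU pp).
Qed.

Lemma prime_filter_cdiff_class p k a b : prime_filter p -> ~ height_ge p k ->
  codim_ge (cdiff a b) k -> p a -> p b.
Proof.
move=> pp hk hc pa; have := prime_filter_up pp pa (le_cdiff a b).
by case/(prime_filterU pp) => // /(hc p pp).
Qed.

Lemma cong_cdiff d a b :
  cong (dL d) a b <-> codim_ge (cdiff a b) d /\ codim_ge (cdiff b a) d.
Proof.
split=> [[c1 [c2 [/is_diffE -> [/is_diffE -> h]]]]|[h1 h2]].
  by split; apply: codim_ge_anti h; [exact: leUl | exact: leUr].
exists (cdiff a b), (cdiff b a); do 2! (split; first exact: cdiffP).
exact: codim_geU.
Qed.

Lemma cdiff_prime_sub s e f : prime_filter s -> s (cdiff e f) ->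
  exists s', [/\ prime_filter s', forall a, s' a -> s a, s' e & ~ s' f].
Proof.
move=> ps sd; pose I c := exists2 t, ~ s t & c <= t `|` f.
have I_down a b : I b -> a <= b -> I a.
  by move=> [t nt bt] ab; exists t => //; apply: le_trans bt.
have I_join a b : I a -> I b -> I (a `|` b).
  move=> [t nt at_] [t' nt' bt']; exists (t `|` t'); first exact: prime_filterNU.
  by rewrite leUx (le_trans at_) ?(le_trans bt') // leU2 ?leUl ?leUr.
have I0 : I \bot by exists \bot; [exact: prime_filterN0 | exact: le0x].
have Ie : ~ I e.
  case=> t nt et; apply: nt; apply: prime_filter_up ps sd _.
  by apply: cdiff_min; rewrite joinC.
have [M [pM Me MI]] := prime_filter_theorem I_down I_join I0 Ie.
exists M; split=> // [a Ma|Mf].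
  by apply: NNPP => nsa; apply: (MI a Ma); exists a; rewrite ?leUl.
by apply: (MI f Mf); exists \bot; [exact: prime_filterN0 | exact: leUr].
Qed.

(** * Primes of finite height *)

Section Precompact.
Hypotheses (hH : Hausdorff L) (hP : precompact L).
Implicit Types (t : L) (s u : L -> Prop).

Lemma separating_prime e f : ~ e <= f ->
  exists s, [/\ prime_filter s, s e, ~ s f & finite_height s].
Proof.
move/cdiff_eq0/eqP/hH => [n [_ hn]].
have [s [ps sd hs]] : exists s, [/\ prime_filter s, s (cdiff e f) & ~ height_ge s n.+1].
  by apply: NNPP => hno; apply: hn => s ps sd; apply: NNPP => hs; apply: hno; exists s.
have [s' [ps' s's s'e s'f]] := cdiff_prime_sub ps sd.
by exists s'; split=> //; apply: finite_height_sub s's _; exists n.+1.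
Qed.

Lemma codim_ge_all_eq0 a : (forall d, (0 < d)%N -> codim_ge a d) -> a = \bot.
Proof. by move=> h; apply: NNPP => /eqP /hH [n [_]]; apply; apply: h. Qed.

Lemma cdiff_classes d : (0 < d)%N -> exists S : seq L, forall a,
  exists2 b, b \in S & codim_ge (cdiff a b) d /\ codim_ge (cdiff b a) d.
Proof. by move=> /hP [S hS]; exists S => a; have [b bS /cong_cdiff] := hS a; exists b. Qed.

Lemma finite_height_prime_cotop p : prime_filter p -> finite_height p ->
  exists t, [/\ ~ p t, forall c, ~ p c -> c <= t &
    forall q, prime_filter q -> finite_height q -> ~ q t -> forall a, q a -> p a].
Proof.
move=> pp [N hN]; have hN1 : ~ height_ge p N.+1 by move/(height_ge_le (leqnSn N)).
have [S hS] := cdiff_classes (ltn0Sn N).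
have [t pt ht] := prime_filter_join_seq S pp.
have contains_t u a : prime_filter u -> ~ height_ge u N.+1 -> u a -> ~ p a -> u t.
  move=> pu hu ua npa; have [b bS [hab hba]] := hS a.
  have npb : ~ p b by move/(prime_filter_cdiff_class pp hN1 hba).
  exact: prime_filter_up pu (prime_filter_cdiff_class pu hu hab ua) (ht b bS npb).
have below q : prime_filter q -> finite_height q -> ~ q t -> forall a, q a -> p a.
  move=> pq fq qt a qa; apply: NNPP => npa.
  have [qN|qN] := classic (height_ge q N); last first.
    by apply/qt/(contains_t q a) => // /(height_ge_le (leqnSn N)).
  have [u [pu uq huN huN1]] := prime_height_exact_below pq fq qN.
  have [a' ua' npa'] : exists2 a', u a' & ~ p a'.
    apply: NNPP => hno; apply: hN; apply: height_ge_sub huN => a' ua'.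
    by apply: NNPP => npa'; apply: hno; exists a'.
  exact/qt/uq/(contains_t u a').
exists t; split=> // c npc; apply: NNPP => nct.
have [s [ps sc st fs]] := separating_prime nct.
exact/npc/(below s).
Qed.

Lemma finite_height_prime_principal p : prime_filter p -> finite_height p ->
  exists2 x, join_irr x & forall a, p a <-> x <= a.
Proof.
move=> pp fp; have [N hN] := fp.
have hN1 : ~ height_ge p N.+1 by move/(height_ge_le (leqnSn N)).
have [S hS] := cdiff_classes (ltn0Sn N).
have [e pe he] := prime_filter_meet_seq S pp.
have [t [pt _ below]] := finite_height_prime_cotop pp fp.
suff px c : p c <-> cdiff e t <= c.
  by exists (cdiff e t) => //; exact: principal_prime_join_irr pp px.
split; last first.
  exact: prime_filter_up pp (prime_filter_cdiff pp pe pt).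
move=> pc; apply: cdiff_min; apply: NNPP => etc.
have [s [ps se stc fs]] := separating_prime etc.
have sp := below s ps fs (fun st => stc (prime_filter_up ps st (leUl _ _))).
have [b bS [hcb hbc]] := hS c.
have sb : s b := prime_filter_up ps se (he b bS (prime_filter_cdiff_class pp hN1 hcb pc)).
have hsN1 : ~ height_ge s N.+1 by move/(height_ge_sub sp).
exact/stc/(prime_filter_up ps (prime_filter_cdiff_class ps hsN1 hbc sb) (leUr _ _)).
Qed.

(** * Join irreducible elements *)

Lemma join_irr_codim x : join_irr x -> exists n, codim_eq x n.
Proof. by move/join_irr_neq0/hH. Qed.

Lemma join_irr_finite_height x : join_irr x -> finite_height (up x).
Proof.
by move=> jx; have [n [_ hn]] := join_irr_codim jx; exists n.+1 => /(codim_ge_up _ jx).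
Qed.

Lemma codim_eq_lt x y m n : join_irr y -> x < y ->
  codim_eq x m -> codim_eq y n -> (n < m)%N.
Proof.
move=> jy xy [_ hm] [hn _]; rewrite ltnNge; apply/negP => mn; apply: hm.
by apply: codim_ge_le (codim_ge_join_irr_lt jy xy hn); rewrite ltnS.
Qed.

Lemma join_irr_cotop x : join_irr x ->
  exists t, [/\ ~ x <= t, forall c, ~ x <= c -> c <= t &
    forall q, prime_filter q -> finite_height q -> ~ q t -> forall a, q a -> x <= a].
Proof.
by move=> jx; apply: finite_height_prime_cotop (join_irr_finite_height jx);
  exact: join_irr_up_prime.
Qed.

Lemma join_irr_cji x : join_irr x -> cjiL x.
Proof.
move=> jx; have [t [xt ht _]] := join_irr_cotop jx.
split=> //; split; first by rewrite /Lle lex0; apply/negP; exact: join_irr_neq0.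
move=> A s _ [_ [_ lst]] xs; apply: NNPP => hno; apply: xt.
apply: le_trans xs (lst _ I _) => a Aa; apply: ht => xa; apply: hno; by exists a.
Qed.

Lemma join_irr_maximal (P : L -> Prop) z : (forall y, P y -> join_irr y) -> P z ->
  exists2 x, P x & forall y, P y -> ~ x < y.
Proof.
move=> Pji Pz; have [m hm] := join_irr_codim (Pji z Pz).
elim/ltn_ind: m z Pz hm => m IH z Pz hm.
have [[y [Py zy]]|hmax] := classic (exists y, P y /\ z < y); last first.
  by exists z => // y Py zy; apply: hmax; exists y.
have [n hn] := join_irr_codim (Pji y Py).
exact: IH (codim_eq_lt (Pji y Py) zy hm hn) y Py hn.
Qed.

Lemma join_irr_below a v : ~ a <= v -> exists z, [/\ join_irr z, z <= a & ~ z <= v].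
Proof.
move=> av; have [s [ps sa sv fs]] := separating_prime av.
have [z jz hz] := finite_height_prime_principal ps fs.
by exists z; split=> //; [apply/hz | move/hz].
Qed.

Lemma rank_ge_cji_codim n x : join_irr x ->
  rank_ge (@cjiL _ L) (fun y z => z < y) x n <-> codim_ge x n.
Proof.
elim: n x => [|n IH] x jx; first by split=> // _ p.
split=> [[y [/cji_join_irr jy [xy /(IH y jy) hy]]]|]; first exact: codim_ge_join_irr_lt xy hy.
move=> /(codim_ge_up _ jx) [q [pq [[qx nxq] hq]]].
have [y jy hy] := finite_height_prime_principal pq
  (finite_height_sub qx (join_irr_finite_height jx)).
have xy : x < y.
  have xley : x <= y by apply: qx; apply/hy.
  by rewrite lt_def xley andbT; apply/eqP => yx; apply: nxq => a xa; apply/hy; rewrite yx.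
exists y; split; first exact: join_irr_cji.
split=> //; apply/(IH y jy)/(codim_ge_up _ jy).
by apply: height_ge_sub hq => a /hy.
Qed.

Lemma cji_corank_codim x : cjiL x -> exists n, cjiL_corank_eq x n /\ codim_eq x n.
Proof.
move=> /cji_join_irr jx; have [n [hn nhn]] := join_irr_codim jx.
by exists n; do !split=> //; [apply/(rank_ge_cji_codim _ jx) | move/(rank_ge_cji_codim _ jx)].
Qed.

Lemma cji_acc : ~ exists u : nat -> L, (forall n, cjiL (u n)) /\ (forall n, u n < u n.+1).
Proof.
case=> u [cu lu]; pose P y := exists n, y = u n.
have Pji y : P y -> join_irr y by case=> n ->; exact: cji_join_irr.
have [_ [n ->] hmax] := @join_irr_maximal P (u 0) Pji (ex_intro _ 0 erefl).
by apply: hmax (lu n); exists n.+1.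
Qed.

Lemma join_ji_components a : is_lub (fun _ => True) (@Lle _ L) (ji_component a) a.
Proof.
split=> //; split=> [c [_ [ca _]] //|v _ hv]; apply: NNPP => av.
have [z [jz za zv]] := join_irr_below av.
pose P y := [/\ join_irr y, z <= y & y <= a].
have Pji y : P y -> join_irr y by case.
have [x [jx zx xa] hmax] := join_irr_maximal Pji (And3 jz (lexx z) za).
suff cx : ji_component a x by exact/zv/(le_trans zx (hv x cx)).
split=> //; split=> // y jy ya xy; apply/eqP; apply: NNPP => ne.
apply: (hmax y); first by split=> //; exact: le_trans zx xy.
by rewrite lt_def xy andbT; apply/negP.
Qed.

(** * The completion *)

Lemma hat_leP (f g : nat -> L) :
  hat_le f g <-> forall d, (0 < d)%N -> codim_ge (cdiff (f d) (g d)) d.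
Proof.
split=> h d d0.
  have [h1 _] := (cong_cdiff _ _ _).1 (h d d0).
  exact: codim_ge_anti (cdiff_monol _ (leUl _ _)) h1.
apply/cong_cdiff; rewrite (proj2 (cdiff_eq0 _ _) (leUr _ _)); split; last exact: codim_ge0.
apply: codim_ge_anti (cdiff_joinl _ _ _) _.
by apply: codim_geU (h d d0) _; rewrite cdiffxx; exact: codim_ge0.
Qed.

Lemma hat_le_trans (f g k : nat -> L) : hat_le f g -> hat_le g k -> hat_le f k.
Proof.
move=> /hat_leP h1 /hat_leP h2; apply/hat_leP => d d0.
exact: codim_ge_anti (cdiff_trans _ (g d) _) (codim_geU (h1 d d0) (h2 d d0)).
Qed.

Lemma hat_of_elt a : hat_elt (hat_of a).
Proof. by move=> d _; apply/cong_cdiff; rewrite /hat_of cdiffxx; split; exact: codim_ge0. Qed.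

Lemma hat_of_le a b : hat_le (hat_of a) (hat_of b) <-> a <= b.
Proof.
split=> [/hat_leP h|ab]; first by apply/cdiff_eq0/codim_ge_all_eq0 => d /h.
by apply/hat_leP => d _; rewrite /hat_of (proj2 (cdiff_eq0 _ _) ab); exact: codim_ge0.
Qed.

Lemma hat_of_lubU a b : is_lub (@hat_elt _ L) (@hat_le _ L)
  (fun g : nat -> L => g = hat_of a \/ g = hat_of b) (hat_of (a `|` b)).
Proof.
split; first exact: hat_of_elt.
split=> [g [->|->]|u _ hu]; first exact/hat_of_le/leUl; first exact/hat_of_le/leUr.
have /hat_leP ha := hu _ (or_introl erefl); have /hat_leP hb := hu _ (or_intror erefl).
apply/hat_leP => d d0; apply: codim_ge_anti (cdiff_joinl _ _ _) _.
exact: codim_geU (ha d d0) (hb d d0).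
Qed.

Lemma cjiHat_leU (f : nat -> L) a b : cjiHat f -> hat_le f (hat_of (a `|` b)) ->
  hat_le f (hat_of a) \/ hat_le f (hat_of b).
Proof.
case=> _ [_ hc] fab.
have pair_elt (g : nat -> L) : g = hat_of a \/ g = hat_of b -> hat_elt g.
  by case=> ->; exact: hat_of_elt.
by have [g [[->|->] hg]] := hc _ _ pair_elt (hat_of_lubU a b) fab; [left|right].
Qed.

Lemma prime_filter_hat_stable q k (f : nat -> L) : prime_filter q -> ~ height_ge q k ->
  hat_elt f -> (0 < k)%N -> forall i, q (f (k + i)%N) <-> q (f k).
Proof.
move=> pq hk hf k0; elim=> [|i IH]; first by rewrite addn0.
rewrite -IH addnS; have hki : ~ height_ge q (k + i) by move/(height_ge_le (leq_addr i k)).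
have [h1 h2] := (cong_cdiff _ _ _).1 (hf _ (leq_trans k0 (leq_addr i k))).
by split; apply: prime_filter_cdiff_class pq hki _.
Qed.

Lemma hat_of_le_join_irr x h (f : nat -> L) : join_irr x -> codim_eq x h -> hat_elt f ->
  x <= f h.+1 -> hat_le (hat_of x) f.
Proof.
move=> jx [hx nhx] hf xf; apply/hat_leP => d d0; rewrite /hat_of.
have [dh|hd] := leqP d h; first exact: codim_ge_anti (cdiff_le _ _) (codim_ge_le dh hx).
have nup : ~ height_ge (up x) h.+1 by move/(codim_ge_up _ jx).
have := prime_filter_hat_stable (join_irr_up_prime jx) nup hf isT (d - h.+1).
rewrite subnKC // => stable.
by rewrite (proj2 (cdiff_eq0 _ _) (stable.2 xf)); exact: codim_ge0.
Qed.

Lemma hat_of_le_prime q x d (f : nat -> L) : hat_elt f -> join_irr x ->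
  prime_filter q -> ~ height_ge q d -> (0 < d)%N -> q (f d) ->
  (forall a, q a -> x <= a) -> hat_le (hat_of x) f.
Proof.
move=> hf jx pq hq d0 qf qx; have [h hh] := join_irr_codim jx.
have nup : ~ height_ge (up x) h.+1 by case: hh => _ nh /(codim_ge_up _ jx).
apply: (hat_of_le_join_irr jx hh hf).
apply/(prime_filter_hat_stable (join_irr_up_prime jx) nup hf isT d).
rewrite addnC; apply: qx; exact/(prime_filter_hat_stable pq hq hf d0 h.+1).
Qed.

(* By Esakia's lemma, [codim (f d - c) >= d] reduces to primes containing [f d]. *)
Lemma hat_le_hat_of (f : nat -> L) c :
  (forall d q, (0 < d)%N -> prime_filter q -> ~ height_ge q d -> q (f d) -> q c) ->
  hat_le f (hat_of c).
Proof.
move=> hfc; apply/hat_leP => d d0 q pq qd; apply: NNPP => hq.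
have [q' [pq' q'q q'f q'c]] := cdiff_prime_sub pq qd.
by apply: q'c; apply: (hfc d q') => // /(height_ge_sub q'q).
Qed.

Lemma hat_join_irr_below (f : nat -> L) : hat_elt f -> ~ hat_le f (hat_of \bot) ->
  exists2 z, join_irr z & hat_le (hat_of z) f.
Proof.
move=> hf nf0; apply: NNPP => hno; apply: nf0; apply: hat_le_hat_of => d q d0 pq hq qf.
have [z jz hz] := finite_height_prime_principal pq (ex_intro _ d hq).
by case: hno; exists z => //; apply: hat_of_le_prime hf jz pq hq d0 qf _ => a /hz.
Qed.

Lemma hat_le_cotop x t (f : nat -> L) : join_irr x ->
  (forall q, prime_filter q -> finite_height q -> ~ q t -> forall a, q a -> x <= a) ->
  hat_elt f -> ~ hat_le (hat_of x) f -> hat_le f (hat_of t).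
Proof.
move=> jx below hf nxf; apply: hat_le_hat_of => d q d0 pq hq qf; apply: NNPP => qt.
exact/nxf/(hat_of_le_prime hf jx pq hq d0 qf)/(below q pq (ex_intro _ d hq) qt).
Qed.

Lemma hat_of_cji x : cjiHat (hat_of x) -> cjiL x.
Proof.
move=> cx; apply: join_irr_cji; split.
  by apply/eqP => x0; case: cx => _ [+ _]; apply; apply/hat_of_le; rewrite x0.
by move=> a b /hat_of_le /(cjiHat_leU cx) [] /hat_of_le; [left|right].
Qed.

Lemma cji_hat_of x : cjiL x -> cjiHat (hat_of x).
Proof.
move/cji_join_irr => jx; have [t [xt _ below]] := join_irr_cotop jx.
split; first exact: hat_of_elt.
split; first by move/hat_of_le; rewrite lex0; apply/negP/join_irr_neq0.
move=> A s hA [_ [_ lst]] xs; apply: NNPP => hno.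
have st : hat_le s (hat_of t).
  apply: lst (hat_of_elt t) _ => f Af; apply: hat_le_cotop jx below (hA f Af) _.
  by move=> xf; apply: hno; exists f.
by apply: xt; apply/hat_of_le; apply: hat_le_trans xs st.
Qed.

Lemma cjiHat_hat_of (f : nat -> L) : cjiHat f -> exists x, cjiL x /\ hat_eq f (hat_of x).
Proof.
move=> cf; have [hf [nf0 _]] := cf.
have [z jz zf] := hat_join_irr_below hf nf0.
pose P y := join_irr y /\ hat_le (hat_of y) f.
have Pji y : P y -> join_irr y by case.
have [x [jx xf] hmax] := join_irr_maximal Pji (conj jz zf).
have [t [xt _ below]] := join_irr_cotop jx.
suff fxt : hat_le f (hat_of (x `|` t)).
  case/(cjiHat_leU cf): fxt => [fx|ft]; first by exists x; split=> //; exact: join_irr_cji.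
  by case: xt; apply/hat_of_le; apply: hat_le_trans xf ft.
apply: hat_le_hat_of => d q d0 pq hq qf; apply: NNPP => qxt.
have [y jy hy] := finite_height_prime_principal pq (ex_intro _ d hq).
have xy : x <= y.
  apply: (below q pq (ex_intro _ d hq)); last exact/hy.
  by move=> qt; apply: qxt; apply: prime_filter_up pq qt (leUr _ _).
apply: (hmax y); first by split=> //; apply: hat_of_le_prime hf jy pq hq d0 qf _ => a /hy.
rewrite lt_def xy andbT; apply/eqP => yx; apply: qxt.
by apply: prime_filter_up pq _ (leUl _ _); apply/hy; rewrite yx.
Qed.

End Precompact.
End CoHeyting.

Theorem proposition6p6 (disp : Order.disp_t) (L : tbDistrLatticeType disp)
  (hcoH : coHeyting L) (hH : Hausdorff L) (hP : precompact L) :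
  ((forall x : L, cjiL x <-> cjiHat (hat_of x)) /\
   (forall f : nat -> L, cjiHat f -> exists x : L, cjiL x /\ hat_eq f (hat_of x))) /\
  (forall x : L, join_irr x -> cjiL x) /\
  (forall x : L, cjiL x -> exists n : nat, cjiL_corank_eq x n /\ codim_eq x n) /\
  ~ (exists u : nat -> L, (forall n, cjiL (u n)) /\ (forall n, u n < u n.+1)) /\
  (forall a : L, is_lub (fun _ => True) (@Lle _ L) (ji_component a) a).
Proof.
split; first split.
- by move=> x; split; [exact: cji_hat_of | exact: hat_of_cji].
- exact: cjiHat_hat_of.
split; first exact: join_irr_cji.
split; first exact: cji_corank_codim.
by split; [exact: cji_acc | exact: join_ji_components].
Qed.
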